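(* Assume $\mathrm{recc}(C)\subseteq\mathrm{recc}(P^B)$. Fix $k\in N_2$ and assume $N_0\not\subseteq J$. Then the projection of $Q'_k$ onto the $x$-variables equals $$\Big\{x\in\mathbb{R}^N_+:\sum_{i\in S}x_i-\sum_{j\in N\setminus J}\frac{x_j}{\varepsilon'_j(S)}\le0\ \ \forall S\subseteq M'\Big\}.$$
   Context: Let $A\in\mathbb{R}^{m\times n}$ have full row rank, $b\in\mathbb{R}^m$, and $P=\{x\in\mathbb{R}^n_+:Ax=b\}$. Let $C\subseteq\mathbb{R}^n$ be an open convex set. Fix a basis $B$ of $P$ with nonbasic set $N=\{1,\dots,n\}\setminus B$. Write $P=\{x:x_i=\bar b_i-\sum_{j\in N}\bar a_{ij}x_j\ (i\in B),\ x\ge0\}$ with $\bar b\ge0$. The basic solution $\bar x$ has $\bar x_i=\bar b_i$ ($i\in B$) and $0$ ($i\in N$). $P^B$ is obtained by dropping $x_i\ge0$ for $i\in B$. For $j\in N$, $\bar r^j$ has $\bar r^j_k=-\bar a_{kj}$ ($k\in B$), $\bar r^j_j=1$, and $0$ otherwise. Thus $P^B=\{\bar x+\sum_{j\in N}x_j\bar r^j:x_j\ge0\}$. It is assumed that $\bar x\notin\mathrm{cl}(C)$. For $j\in N$, $\alpha_j=\inf\{\lambda\ge0:\bar x+\lambda\bar r^j\in C\}$ and $\beta_j=\sup\{\lambda\ge0:\bar x+\lambda\bar r^j\in C\}$, with $\alpha_j=+\infty$, $\beta_j=-\infty$ if the halfline misses $C$. Define - $N_0=\{j:\alpha_j=+\infty,\beta_j=-\infty\}$;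 - $N_2=\{j:\alpha_j\in(0,\infty),\beta_j\in(\alpha_j,\infty)\}$. For a set $K$, $\mathrm{recc}(K)=\{d:x+\lambda d\in K\ \forall x\in K,\lambda\ge0\}$. We use the convention $t/+\infty=0$. For $k\in N_2$, $S_k^C=\{\bar x\}+\mathrm{conv}\big(\bigcup_{j\in N_2}\{\lambda\bar r^j:0\le\lambda<\beta_j\}\big)+\{\lambda\bar r^k:\lambda\le0\}+\mathrm{recc}(C)$. Let $J=\{i\in N:\bar r^i\in\mathrm{recc}(S_k^C)\}$. For $i\in J$, $j\in N\setminus J$, $\gamma'_{ij}=\sup\{\gamma\ge0:\bar r^i+\gamma\bar r^j\in\mathrm{recc}(S_k^C)\}$. Let $M'=\{i\in J:\gamma'_{ij}>0\ \forall j\in N\setminus J\}$. For $S\subseteq M'$, $\varepsilon'_j(S)=\min_{i\in S}\gamma'_{ij}$ if $S\neq\emptyset$, and $+\infty$ otherwise. Extended formulation. Let $m_1=|M'|$. For each $j\in N\setminus J$ let $\pi_j:\{1,\dots,m_1\}\to M'$ be a bijection with $\gamma'_{\pi_j(1),j}\le\dots\le\gamma'_{\pi_j(m_1),j}$, and let $\ell_j=\pi_j^{-1}$. Set $1/\gamma'_{\pi_j(m_1+1),j}:=0$ (and $1/\gamma'_{\pi_j(1),j}:=0$ if $m_1=0$), and $v_{m_1+1,j}:=0$. $Q'_k$ is the set of $(x,\theta,v,\lambda)$ with $x\in\mathbb{R}^N_+$, $\theta=(\theta_{ij})\ge0$ and $v=(v_{ij})\ge0$ indexed by $i\in\{1,\dots,m_1\}$,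 $j\in N\setminus J$, and $\lambda\in\mathbb{R}^{N\setminus J}$ free, satisfying: 1. $\sum_{i=1}^{m_1}\sum_{j\in N\setminus J}\theta_{ij}+\sum_{j\in N\setminus J}\lambda_j\le0$; 2. $\lambda_j-v_{1j}+x_j/\gamma'_{\pi_j(1),j}\ge0$ for all $j\in N\setminus J$; 3. $\theta_{ij}+v_{ij}-v_{i+1,j}+\big(1/\gamma'_{\pi_j(i+1),j}-1/\gamma'_{\pi_j(i),j}\big)x_j\ge0$ for all $i=1,\dots,m_1$ and $j\in N\setminus J$; 4. $\sum_{j\in N\setminus J}\theta_{\ell_j(i),j}-x_i\ge0$ for all $i\in M'$. *)

From HB Require Import structures.
From mathcomp Require Import all_boot all_order all_algebra.
From mathcomp Require Import all_classical all_reals all_analysis.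
Set Implicit Arguments.
Unset Strict Implicit.
Unset Printing Implicit Defensive.
Import Order.TTheory GRing.Theory Num.Theory.
Import numFieldTopology.Exports numFieldNormedType.Exports.
Local Open Scope classical_set_scope.
Local Open Scope ring_scope.

Section Defs.
Variables (R : realType) (n : nat).
Local Notation vec := 'cV[R]_n.

Definition convex_set (K : set vec) : Prop :=
  forall x y (t : R), K x -> K y -> 0 <= t <= 1 -> K ((1 - t) *: x + t *: y).

Definition recc (K : set vec) : set vec :=
  [set d | forall x (l : R), K x -> 0 <= l -> K (x + l *: d)].

Definition msum (K L : set vec) : set vec :=
  [set z | exists a b, K a /\ L b /\ z = a + b].

Definition chull (D : set vec) : set vec :=
  [set z | exists (p : nat) (q : 'I_p -> vec) (w : 'I_p -> R),
     (forall i, D (q i)) /\ (forall i, 0 <= w i) /\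
     \sum_(i < p) w i = 1 /\ z = \sum_(i < p) w i *: q i].

Definition Pset (m : nat) (A : 'M[R]_(m, n)) (b : 'cV[R]_m) : set vec :=
  [set x | A *m x = b /\ forall i, 0 <= x i 0].

(* tableau data: basis B, abar (ab i j), bbar (bb i) *)
Variables (B : {set 'I_n}) (ab : 'I_n -> 'I_n -> R) (bb : 'I_n -> R).

Definition tableau_eqs (x : vec) : Prop :=
  forall i, i \in B -> x i 0 = bb i - \sum_(j in ~: B) ab i j * x j 0.

Definition xbar : vec := \col_i (if i \in B then bb i else 0).

Definition rbar (j : 'I_n) : vec :=
  \col_l (if l \in B then - ab l j else if l == j then 1 else 0).

(* P^B: drop the constraints x_i >= 0 for i in B *)
Definition PB : set vec :=
  [set x | tableau_eqs x /\ (forall j, j \in ~: B -> 0 <= x j 0)].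

Variable C : set vec.

Definition ray_hits (j : 'I_n) : set R :=
  [set l | 0 <= l /\ C (xbar + l *: rbar j)].

(* inf of empty set is +oo, sup of empty set is -oo, as in the paper *)
Definition alpha (j : 'I_n) : \bar R := ereal_inf [set l%:E | l in ray_hits j].
Definition beta (j : 'I_n) : \bar R := ereal_sup [set l%:E | l in ray_hits j].

Definition N0 : {set 'I_n} :=
  [set j in ~: B | (alpha j == +oo)%E && (beta j == -oo)%E].

Definition N2 : {set 'I_n} :=
  [set j in ~: B | (0%E < alpha j < +oo)%E && (alpha j < beta j < +oo)%E].

Variable k : 'I_n.

Definition SkC : set vec :=
  msum (msum (msum [set xbar]
     (chull [set z | exists j, j \in N2 /\
               exists l : R, 0 <= l /\ (l%:E < beta j)%E /\ z = l *: rbar j]))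
     [set z | exists l : R, l <= 0 /\ z = l *: rbar k])
   (recc C).

Definition Jset : {set 'I_n} := [set i in ~: B | `[< recc SkC (rbar i) >]].

Definition NJ : {set 'I_n} := (~: B) :\: Jset.

Definition gam (i j : 'I_n) : \bar R :=
  ereal_sup [set g%:E | g in [set g : R | 0 <= g /\ recc SkC (rbar i + g *: rbar j)]].

Definition Mp : {set 'I_n} := [set i in Jset | [forall j in NJ, (0%E < gam i j)%E]].

Definition eps (S : {set 'I_n}) (j : 'I_n) : \bar R :=
  \big[Order.min/+oo%E]_(i in S) gam i j.

(* 1/e with the convention 1/+oo = 0 *)
Definition inv_e (e : \bar R) : R := if e is r%:E then r^-1 else 0.

(* the right-hand side set (x only read on N) *)
Definition proj_set : set ('I_n -> R) :=
  [set x | (forall j, j \in ~: B -> 0 <= x j) /\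
     forall S : {set 'I_n}, S \subset Mp ->
       \sum_(i in S) x i - \sum_(j in NJ) x j * inv_e (eps S j) <= 0].

Definition m1 : nat := #|Mp|.

(* pi j : {1..m1} -> M' sorted bijection, ell j its inverse *)
Definition sorted_bij (pi : 'I_n -> nat -> 'I_n) (ell : 'I_n -> 'I_n -> nat) : Prop :=
  forall j, j \in NJ ->
    (forall a, (1 <= a <= m1)%N -> pi j a \in Mp /\ ell j (pi j a) = a) /\
    (forall i, i \in Mp -> (1 <= ell j i <= m1)%N /\ pi j (ell j i) = i) /\
    (forall a c, (1 <= a)%N -> (a <= c <= m1)%N -> (gam (pi j a) j <= gam (pi j c) j)%E).

(* 1/gam'_{pi_j(a), j}, with 1/gam'_{pi_j(m1+1), j} := 0 *)
Definition coef (pi : 'I_n -> nat -> 'I_n) (j : 'I_n) (a : nat) : R :=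
  if (1 <= a <= m1)%N then inv_e (gam (pi j a) j) else 0.

(* v with v_{m1+1, j} := 0 *)
Definition vv (v : nat -> 'I_n -> R) (a : nat) (j : 'I_n) : R :=
  if (a <= m1)%N then v a j else 0.

Definition Qk (pi : 'I_n -> nat -> 'I_n) (ell : 'I_n -> 'I_n -> nat) (x : 'I_n -> R)
    (th v : nat -> 'I_n -> R) (lam : 'I_n -> R) : Prop :=
  (forall j, j \in ~: B -> 0 <= x j) /\
  (forall i j, (1 <= i <= m1)%N -> j \in NJ -> 0 <= th i j /\ 0 <= v i j) /\
  \sum_(1 <= i < m1.+1) \sum_(j in NJ) th i j + \sum_(j in NJ) lam j <= 0 /\
  (forall j, j \in NJ -> 0 <= lam j - vv v 1 j + x j * coef pi j 1) /\
  (forall i j, (1 <= i <= m1)%N -> j \in NJ ->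
     0 <= th i j + v i j - vv v i.+1 j + (coef pi j i.+1 - coef pi j i) * x j) /\
  (forall i, i \in Mp -> 0 <= \sum_(j in NJ) th (ell j i) j - x i).

End Defs.

(* Eliminating v and lambda from Q'_k (v_aj is the slack
   x_j / gam'_{pi_j(a) j} - sum_{b >= a} theta_bj and lambda_j = - sum_b theta_bj)
   leaves the system theta >= 0, sum_{b >= a} theta_bj <= x_j / gam'_{pi_j(a) j}
   and x_i <= sum_j theta_{ell_j(i) j}.  For S a subset of M' and a column j, the
   entries theta_{ell_j(i) j} with i in S all have rank at least a = min_S ell_j,
   and the tail from rank a is at most x_j / gam'_{pi_j(a) j} = x_j / eps'_j(S);
   summing the covering inequalities over S gives the inequalities of the
   projection.
   Conversely the system is a transportation problem: the demand x_i may be sent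
   to any slot (j, i') with ell_j(i) <= ell_j(i'), and slot (j, i') has capacity
   x_j (1/gam'_{i' j} - 1/gam'_{pi_j(ell_j(i') + 1) j}), so that the slots of
   rank >= a in column j hold x_j / gam'_{pi_j(a) j} together.  The inequalities
   indexed by S then say exactly that every set of demands fits into the
   capacity of its neighbourhood, and the supply-demand theorem (fractional Hall
   theorem) provides the flow; theta_aj is what pi_j(a) sends into column j. *)

From HB Require Import structures.
From mathcomp Require Import all_boot all_order all_algebra.
From mathcomp Require Import all_classical all_reals all_analysis.
From mathcomp Require Import lra.

Set Implicit Arguments.
Unset Strict Implicit.
Unset Printing Implicit Defensive.
Import Order.TTheory GRing.Theory Num.Theory.
Import numFieldTopology.Exports numFieldNormedType.Exports.
Local Open Scope ring_scope.

Section PointwiseOperations.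
Context {R : realFieldType} {T : finType}.
Implicit Types (g : T -> R) (A S : {set T}).

Definition upd g a t x := g x - (x == a)%:R * t.

Definition restr A g x := if x \in A then g x else 0.

Definition pos_supp g : {set T} := [set x : T | 0 < g x].

Lemma sum_delta (a : T) (y : R) : \sum_x (x == a)%:R * y = y.
Proof.
by rewrite (bigD1 a) //= eqxx mul1r big1 ?addr0 // => x /negbTE ->; rewrite mul0r.
Qed.

Lemma sum_upd g a t S :
  \sum_(x in S) upd g a t x = \sum_(x in S) g x - (a \in S)%:R * t.
Proof.
rewrite sumrB; congr (_ - _).
rewrite big_mkcond -(sum_delta a ((a \in S)%:R * t)) /=.
by apply: eq_bigr => x _; case: eqVneq => [->|_]; case: ifP; rewrite ?mul1r ?mul0r.
Qed.

Lemma upd_at g a t : upd g a t a = g a - t.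
Proof. by rewrite /upd eqxx mul1r. Qed.

Lemma upd_ge0 g a t : (forall x, 0 <= g x) -> t <= g a -> forall x, 0 <= upd g a t x.
Proof.
by move=> g0 tg x; have := g0 x; rewrite /upd; case: eqVneq => [->|_] => ? /=;
  rewrite ?mul1r ?mul0r; lra.
Qed.

Lemma upd_le g a t x : 0 <= t -> upd g a t x <= g x.
Proof. by rewrite /upd; case: eqVneq => _ ? /=; rewrite ?mul1r ?mul0r; lra. Qed.

Lemma sum_restr A g S : \sum_(x in S) restr A g x = \sum_(x in S :&: A) g x.
Proof.
rewrite big_mkcond [RHS]big_mkcond; apply: eq_bigr => x _.
by rewrite inE /restr; case: (x \in S); case: (x \in A).
Qed.

Lemma restr_ge0 A g : {in A, forall x, 0 <= g x} -> forall x, 0 <= restr A g x.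
Proof. by move=> g0 x; rewrite /restr; case: ifP => // /g0. Qed.

Lemma restr_le A g : (forall x, 0 <= g x) -> forall x, restr A g x <= g x.
Proof. by move=> g0 x; rewrite /restr; case: ifP. Qed.

Lemma restrC A g x : restr A g x + restr (~: A) g x = g x.
Proof. by rewrite /restr inE; case: (x \in A); rewrite ?addr0 ?add0r. Qed.

Lemma pos_supp_le g g' : (forall x, g' x <= g x) -> (#|pos_supp g'| <= #|pos_supp g|)%N.
Proof.
move=> le_g; apply/subset_leq_card/fintype.subsetP => x.
by rewrite !inE => /lt_le_trans; apply.
Qed.

Lemma pos_supp_lt g g' a : (forall x, g' x <= g x) -> 0 < g a -> g' a <= 0 ->
  (#|pos_supp g'| < #|pos_supp g|)%N.
Proof.
move=> le_g ga g'a; apply/proper_card/properP; split.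
  by apply/fintype.subsetP => x; rewrite !inE => /lt_le_trans; apply.
by exists a; rewrite !inE // -leNgt.
Qed.

End PointwiseOperations.

Section SupplyDemand.
Context {R : realFieldType} {L K : finType} (E : L -> K -> bool).
Implicit Types (d : L -> R) (c : K -> R) (S T : {set L}).

Definition nbhd S : {set K} := [set k | [exists i in S, E i k]].

Definition slack d c S := \sum_(k in nbhd S) c k - \sum_(i in S) d i.

Definition hall_condition d c :=
  forall S, \sum_(i in S) d i <= \sum_(k in nbhd S) c k.

Definition feasible_flow (f : L -> K -> R) d c :=
  [/\ forall i k, 0 <= f i k, forall i k, ~~ E i k -> f i k = 0,
      forall i, d i <= \sum_k f i k & forall k, \sum_i f i k <= c k].

Definition support_size d c := (#|pos_supp d| + #|pos_supp c|)%N.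

Definition solvable_below d c :=
  forall d' c', (support_size d' c' < support_size d c)%N ->
  (forall i, 0 <= d' i) -> (forall k, 0 <= c' k) -> hall_condition d' c' ->
  exists f, feasible_flow f d' c'.

Lemma nbhdP S k : reflect (exists2 i, i \in S & E i k) (k \in nbhd S).
Proof. by rewrite inE; apply: exists_inP. Qed.

Lemma nbhdU S T : nbhd (S :|: T) = nbhd S :|: nbhd T.
Proof.
apply/setP => k; rewrite finset.in_setU; apply/nbhdP/orP => [[i]|[]].
- by rewrite inE => /orP[] iST Eik; [left | right]; apply/nbhdP; exists i.
- by move=> /nbhdP[i iS Eik]; exists i; rewrite // inE iS.
- by move=> /nbhdP[i iT Eik]; exists i; rewrite // inE iT orbT.
Qed.

Lemma support_size_le d c d' c' :
  (forall i, d' i <= d i) -> (forall k, c' k <= c k) ->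
  (support_size d' c' <= support_size d c)%N.
Proof. by move=> ? ?; apply: leq_add; apply: pos_supp_le. Qed.

Lemma support_size_lt d c d' c' :
  (forall i, d' i <= d i) -> (forall k, c' k <= c k) ->
  (exists i, 0 < d i /\ d' i <= 0) \/ (exists k, 0 < c k /\ c' k <= 0) ->
  (support_size d' c' < support_size d c)%N.
Proof.
move=> le_d le_c [[i [di d'i]]|[k [ck c'k]]].
  by rewrite /support_size -addSn; apply: leq_add; [exact: pos_supp_lt di d'i|exact: pos_supp_le].
by rewrite /support_size -addnS; apply: leq_add; [exact: pos_supp_le|exact: pos_supp_lt ck c'k].
Qed.

Lemma feasible_flow0 d c : (forall i, d i <= 0) -> (forall k, 0 <= c k) ->
  feasible_flow (fun _ _ => 0) d c.
Proof. by move=> d0 c0; split=> // [i|k]; rewrite big1. Qed.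

Lemma feasible_flowD f1 f2 d c d1 c1 d2 c2 :
  (forall i, d i <= d1 i + d2 i) -> (forall k, c1 k + c2 k <= c k) ->
  feasible_flow f1 d1 c1 -> feasible_flow f2 d2 c2 ->
  feasible_flow (fun i k => f1 i k + f2 i k) d c.
Proof.
move=> le_d le_c [f10 f1E f1d f1c] [f20 f2E f2d f2c]; split.
- by move=> i k; apply: addr_ge0.
- by move=> i k nE; rewrite f1E // f2E // addr0.
- by move=> i; rewrite big_split /=; have := f1d i; have := f2d i; have := le_d i; lra.
- by move=> k; rewrite big_split /=; have := f1c k; have := f2c k; have := le_c k; lra.
Qed.

Lemma feasible_flow_route f d c i0 k0 t : 0 <= t -> E i0 k0 ->
  feasible_flow f (upd d i0 t) (upd c k0 t) ->
  feasible_flow (fun i k => f i k + (i == i0)%:R * ((k == k0)%:R * t)) d c.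
Proof.
move=> t0 Ek [f0 fE fd fc]; split.
- by move=> i k; rewrite addr_ge0 ?mulr_ge0.
- move=> i k nE; rewrite fE //.
  by case: eqVneq => [ei|]; case: eqVneq => [ek|]; rewrite ?mul0r ?mulr0 ?addr0 //;
    move: nE; rewrite ei ek Ek.
- by move=> i; rewrite big_split /= -mulr_sumr sum_delta; have := fd i; rewrite /upd; lra.
- by move=> k; rewrite big_split /= sum_delta; have := fc k; rewrite /upd; lra.
Qed.

Lemma hall_condition_route d c i0 k0 t :
  (forall i, 0 <= d i) -> (forall k, 0 <= c k) -> hall_condition d c ->
  t <= c k0 -> E i0 k0 ->
  (forall S, i0 \notin S -> k0 \in nbhd S -> (exists2 i, i \in S & 0 < d i) ->
     t <= slack d c S) ->
  hall_condition (upd d i0 t) (upd c k0 t).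
Proof.
move=> d0 c0 hc tc Ek t_slack S; rewrite !sum_upd.
have [i0S|i0S] := boolP (i0 \in S).
  have -> : k0 \in nbhd S by apply/nbhdP; exists i0.
  by have := hc S; lra.
rewrite mul0r subr0; have [k0S|_] := boolP (k0 \in nbhd S); last first.
  by have := hc S; rewrite mul0r; lra.
rewrite mul1r.
have [/exists_inP[i iS di]|no_pos] := boolP [exists i in S, 0 < d i].
  by have := t_slack S i0S k0S (ex_intro2 _ _ i iS di); rewrite /slack; lra.
have dS : \sum_(i in S) d i <= 0.
  by apply: sumr_le0 => i iS; rewrite leNgt; apply: contraNN no_pos => di;
    apply/exists_inP; exists i.
have := sum_upd c k0 t (nbhd S); rewrite k0S mul1r => <-.
by apply: le_trans dS _; apply: sumr_ge0 => k _; apply: upd_ge0.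
Qed.

Lemma hall_condition_restr d c S : (forall k, 0 <= c k) -> hall_condition d c ->
  hall_condition (restr S d) (restr (nbhd S) c).
Proof.
move=> c0 hc T; rewrite sum_restr; apply: le_trans (hc _) _.
rewrite big_mkcond [leRHS]big_mkcond; apply: ler_sum => k _ /=.
case: ifP => [/nbhdP[i] | _]; last by case: ifP => // _; apply: restr_ge0 => ? _.
rewrite inE => /andP[iT iS] Eik.
have -> : k \in nbhd T by apply/nbhdP; exists i.
by rewrite /restr ifT //; apply/nbhdP; exists i.
Qed.

Lemma hall_condition_restrC d c S : hall_condition d c ->
  \sum_(i in S) d i = \sum_(k in nbhd S) c k ->
  hall_condition (restr (~: S) d) (restr (~: nbhd S) c).
Proof.
move=> hc tight T; rewrite !sum_restr -!finset.setDE.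
have := hc (T :|: S); rewrite nbhdU.
rewrite (big_setID S) (big_setID (nbhd S) (A := nbhd T :|: nbhd S)) /=.
rewrite !finset.setDUl !finset.setDv !finset.setU0 !(finset.setIidPr (finset.subsetUr _ _)).
by rewrite tight; lra.
Qed.

Lemma supply_demand_tight d c S :
  (forall i, 0 <= d i) -> (forall k, 0 <= c k) -> hall_condition d c ->
  \sum_(i in S) d i = \sum_(k in nbhd S) c k ->
  (exists2 i, i \in S & 0 < d i) -> (exists2 i, i \notin S & 0 < d i) ->
  solvable_below d c ->
  exists f, feasible_flow f d c.
Proof.
move=> d0 c0 hc tight [i1 i1S di1] [i2 i2S di2] IH.
have [f1 hf1] : exists f, feasible_flow f (restr S d) (restr (nbhd S) c).
  apply: IH; [|by apply: restr_ge0 => ? _|by apply: restr_ge0 => ? _|exact: hall_condition_restr].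
  apply: support_size_lt; [exact: restr_le|exact: restr_le|].
  by left; exists i2; rewrite /restr (negbTE i2S).
have [f2 hf2] : exists f, feasible_flow f (restr (~: S) d) (restr (~: nbhd S) c).
  apply: IH; [|by apply: restr_ge0 => ? _|by apply: restr_ge0 => ? _|exact: hall_condition_restrC].
  apply: support_size_lt; [exact: restr_le|exact: restr_le|].
  by left; exists i1; rewrite /restr inE i1S.
exists (fun i k => f1 i k + f2 i k).
by apply: feasible_flowD hf1 hf2 => [i|k]; rewrite restrC.
Qed.

Lemma supply_demand_route d c i0 k0 t :
  (forall i, 0 <= d i) -> (forall k, 0 <= c k) -> hall_condition d c ->
  E i0 k0 -> 0 <= t -> t <= d i0 -> t <= c k0 ->
  (forall S, i0 \notin S -> k0 \in nbhd S -> (exists2 i, i \in S & 0 < d i) ->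
     t <= slack d c S) ->
  ((forall i, 0 <= upd d i0 t i) -> (forall k, 0 <= upd c k0 t k) ->
     hall_condition (upd d i0 t) (upd c k0 t) ->
     exists f, feasible_flow f (upd d i0 t) (upd c k0 t)) ->
  exists f, feasible_flow f d c.
Proof.
move=> d0 c0 hc Ek t0 td tc t_slack reduced.
have [f hf] : exists f, feasible_flow f (upd d i0 t) (upd c k0 t).
  by apply: reduced; [exact: upd_ge0 | exact: upd_ge0 | exact: hall_condition_route].
by eexists; apply: feasible_flow_route hf.
Qed.

Lemma hall_condition_edge d c i0 : hall_condition d c -> 0 < d i0 ->
  exists2 k0, E i0 k0 & 0 < c k0.
Proof.
move=> hc di0; have [/exists_inP[k /nbhdP[i] /[!inE] /eqP-> Eik ck]|no_cap] :=
  boolP [exists k in nbhd [set i0], 0 < c k]; first by exists k.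
have := hc [set i0]; rewrite big_set1 => /(lt_le_trans di0); rewrite ltNge => /negP[].
apply: sumr_le0 => k kN; rewrite leNgt; apply: contraNN no_cap => ck.
by apply/exists_inP; exists k.
Qed.

(* Route along an edge (i0, k0) as much as Hall's condition allows: either a
   demand or a capacity is exhausted, or some set becomes tight and the instance
   splits along it. *)
Lemma supply_demand_step d c :
  (forall i, 0 <= d i) -> (forall k, 0 <= c k) -> hall_condition d c ->
  solvable_below d c ->
  exists f, feasible_flow f d c.
Proof.
move=> d0 c0 hc IH.
have [/existsP[i0 di0]|no_pos] := boolP [exists i, 0 < d i]; last first.
  exists (fun _ _ => 0); apply: feasible_flow0 => // i.
  by rewrite leNgt; apply: contraNN no_pos => di; apply/existsP; exists i.
have [k0 Ek0 ck0] := hall_condition_edge hc di0.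
pose t0 := Num.min (d i0) (c k0).
have t0_gt0 : 0 < t0 by rewrite lt_min di0 ck0.
have [t0d t0c] : t0 <= d i0 /\ t0 <= c k0 by rewrite !ge_min !lexx orbT.
pose P S := [&& i0 \notin S, k0 \in nbhd S & [exists i in S, 0 < d i]].
have [/existsP[S0 /andP[PS0 S0_lt]]|no_tight] :=
  boolP [exists S, P S && (slack d c S < t0)].
  case: (arg_minP (slack d c) PS0) => Sm /and3P[i0Sm k0Sm /exists_inP[i1 i1Sm di1]].
  set t := slack d c Sm => Sm_min.
  have t_lt : t < t0 := le_lt_trans (Sm_min _ PS0) S0_lt.
  have t_ge0 : 0 <= t by have := hc Sm; rewrite /t /slack; lra.
  apply: (supply_demand_route d0 c0 hc Ek0 t_ge0); [lra | lra | |].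
    move=> S i0S k0S [i iS di]; apply: Sm_min; rewrite /P i0S k0S /=.
    by apply/exists_inP; exists i.
  move=> d'0 c'0 hc'; apply: (supply_demand_tight (S := Sm)) => //.
  - by rewrite !sum_upd (negbTE i0Sm) k0Sm /= mul0r mul1r subr0 /t /slack; lra.
  - exists i1 => //; have i1_neq : i1 != i0 by apply: contraNneq i0Sm => <-.
    by rewrite /upd (negbTE i1_neq) mul0r subr0.
  - by exists i0 => //; rewrite upd_at; lra.
  - move=> d' c' lt; apply: IH; apply: (leq_trans lt).
    by apply: support_size_le => ?; apply: upd_le.
apply: (supply_demand_route d0 c0 hc Ek0 (ltW t0_gt0) t0d t0c).
  move=> S i0S k0S [i iS di]; rewrite leNgt; apply: contraNN no_tight => lt.
  by apply/existsP; exists S; rewrite /P i0S k0S lt andbT /=; apply/exists_inP; exists i.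
move=> d'0 c'0 hc'; apply: IH => //.
apply: support_size_lt => [i|k|]; rewrite ?upd_le ?(ltW t0_gt0) //.
have [t0E|t0E] : t0 = d i0 \/ t0 = c k0 by rewrite /t0; case: ltP; [left|right].
  by left; exists i0; rewrite upd_at t0E subrr.
by right; exists k0; rewrite upd_at t0E subrr.
Qed.

Theorem supply_demand d c :
  (forall i, 0 <= d i) -> (forall k, 0 <= c k) -> hall_condition d c ->
  exists f, feasible_flow f d c.
Proof.
move sz: (support_size d c) => N.
elim/ltn_ind: N d c sz => N IH d c sz d0 c0 hc.
apply: supply_demand_step => // d' c'; rewrite sz => lt.
exact: IH lt d' c' erefl.
Qed.

End SupplyDemand.

Lemma inv_e_ge0 (R : realType) (e : \bar R) : (0 <= e)%E -> 0 <= inv_e e.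
Proof. by case: e => //= r; rewrite lee_fin invr_ge0. Qed.

Lemma inv_e_le (R : realType) (e1 e2 : \bar R) :
  (0 < e1)%E -> (e1 <= e2)%E -> inv_e e2 <= inv_e e1.
Proof.
case: e1 => [r1| |] //=; case: e2 => [r2| |] //=.
- by rewrite !lte_fin !lee_fin => r1_gt0 r12; rewrite lef_pV2 // posrE (lt_le_trans r1_gt0).
- by rewrite lte_fin => r1_gt0 _; rewrite invr_ge0 ltW.
Qed.

Section Projection.
Variables (R : realType) (n : nat) (B : {set 'I_n}) (ab : 'I_n -> 'I_n -> R)
  (bb : 'I_n -> R) (C : set 'cV[R]_n) (k : 'I_n) (pi : 'I_n -> nat -> 'I_n)
  (ell : 'I_n -> 'I_n -> nat).

Local Notation Mp := (Mp B ab bb C k).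
Local Notation NJ := (NJ B ab bb C k).
Local Notation gam := (gam B ab bb C k).
Local Notation m1 := (m1 B ab bb C k).
Local Notation coef := (coef B ab bb C k pi).
Local Notation eps := (eps B ab bb C k).
Local Notation vv := (vv B ab bb C k).
Local Notation Qk := (Qk B ab bb C k pi ell).
Local Notation proj_set := (proj_set B ab bb C k).

Lemma Mp_gam_gt0 i j : i \in Mp -> j \in NJ -> (0 < gam i j)%E.
Proof. by rewrite inE => /andP[_ /forall_inP gam_gt0] /gam_gt0. Qed.

Lemma Mp_nonbasic i : i \in Mp -> i \in ~: B.
Proof. by rewrite !inE => /andP[/andP[]]. Qed.

Lemma NJ_nonbasic j : j \in NJ -> j \in ~: B.
Proof. by rewrite !inE => /andP[]. Qed.

Lemma coef_m1S j : coef j m1.+1 = 0.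
Proof. by rewrite /coef ltnn andbF. Qed.

Lemma sum_coef_tail j a : (a <= m1.+1)%N ->
  \sum_(a <= b < m1.+1) (coef j b - coef j b.+1) = coef j a.
Proof.
move=> a_le; rewrite -[LHS]opprK -sumrN.
under eq_bigr do rewrite opprB.
by rewrite telescope_sumr // coef_m1S sub0r opprK.
Qed.

Definition theta_feasible (x : 'I_n -> R) (th : nat -> 'I_n -> R) : Prop :=
  [/\ forall j, j \in ~: B -> 0 <= x j,
      forall a j, (1 <= a <= m1)%N -> j \in NJ -> 0 <= th a j,
      forall a j, (1 <= a <= m1)%N -> j \in NJ ->
        \sum_(a <= b < m1.+1) th b j <= coef j a * x j &
      forall i, i \in Mp -> x i <= \sum_(j in NJ) th (ell j i) j].

Lemma Qk_theta_feasible x th v lam : Qk x th v lam -> theta_feasible x th.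
Proof.
move=> [x_ge0 [thv_ge0 [sum_le0 [con2 [con3 con4]]]]].
have vv_ge0 a j : (1 <= a)%N -> j \in NJ -> 0 <= vv v a j.
  move=> a_ge1 jNJ; rewrite /vv; case: ifP => // a_le.
  by have [] := thv_ge0 a j (_ : 1 <= a <= m1)%N jNJ; rewrite ?a_ge1.
have partial j : j \in NJ -> forall a, (1 <= a <= m1.+1)%N ->
    0 <= \sum_(1 <= b < a) th b j + vv v 1 j - vv v a j + (coef j a - coef j 1) * x j.
  move=> jNJ; elim=> [//|a IH] /andP[a_ge0 a_le].
  have [->|a_gt0] := posnP a; first by rewrite big_geq //; lra.
  have a_in : (1 <= a <= m1)%N by rewrite a_gt0 -ltnS.
  have a_in' : (1 <= a <= m1.+1)%N by rewrite a_gt0 ltnW.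
  have := IH a_in'; have := con3 a j a_in jNJ.
  rewrite big_nat_recr //= /vv; case/andP: a_in => _ ->; lra.
have total_ge0 j : j \in NJ -> 0 <= \sum_(1 <= b < m1.+1) th b j + lam j.
  move=> jNJ; have := partial j jNJ m1.+1 (leqnn _); have := con2 j jNJ.
  rewrite /vv ltnn coef_m1S; lra.
have total_le0 j : j \in NJ -> \sum_(1 <= b < m1.+1) th b j + lam j <= 0.
  move=> jNJ; move: sum_le0; rewrite exchange_big /= -big_split /= (bigD1 j) //=.
  have : 0 <= \sum_(i in NJ | i != j) (\sum_(1 <= b < m1.+1) th b i + lam i).
    by apply: sumr_ge0 => i /andP[iNJ _]; apply: total_ge0.
  lra.
split=> // [a j a_in jNJ|a j a_in jNJ|i iM]; last by rewrite -subr_ge0 con4.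
  by have [] := thv_ge0 a j a_in jNJ.
have [a_ge1 a_le] := andP a_in.
have a_in' : (1 <= a <= m1.+1)%N by rewrite a_ge1 leqW.
have := partial j jNJ a a_in'; have := con2 j jNJ; have := total_le0 j jNJ.
have := vv_ge0 a j a_ge1 jNJ.
rewrite (big_cat_nat a_ge1 (leqW a_le)) /=; lra.
Qed.

Lemma theta_feasible_Qk x th : theta_feasible x th -> exists v lam, Qk x th v lam.
Proof.
move=> [x_ge0 th_ge0 tail cover].
pose U a j := \sum_(a <= b < m1.+1) th b j.
have U_rec a j : (a <= m1)%N -> U a j = th a j + U a.+1 j.
  by move=> a_le; rewrite /U big_ltn.
pose v a j := coef j a * x j - U a j.
have vvE a j : (a <= m1.+1)%N -> vv v a j = v a j.
  move=> a_le; rewrite /vv; case: ifP => // a_gt.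
  have -> : a = m1.+1 by apply/eqP; rewrite eqn_leq a_le ltnNge a_gt.
  by rewrite /v /U coef_m1S big_geq // mul0r subrr.
exists v, (fun j => - U 1%N j); split=> //; split.
  move=> a j a_in jNJ; split; first exact: th_ge0.
  by rewrite subr_ge0; apply: tail.
split; first by rewrite sumrN /U exchange_big /= subrr.
split; first by move=> j jNJ; rewrite vvE // /v; lra.
split=> [a j a_in jNJ|i iM]; last by rewrite subr_ge0; apply: cover.
rewrite vvE; last by case/andP: a_in.
by rewrite /v U_rec; [lra | case/andP: a_in].
Qed.

Section Sorted.
Hypothesis pi_sorted : sorted_bij B ab bb C k pi ell.

Lemma ell_Mp j i : j \in NJ -> i \in Mp -> (1 <= ell j i <= m1)%N /\ pi j (ell j i) = i.
Proof. by move=> jNJ iM; case: (pi_sorted jNJ) => _ [+ _]; apply. Qed.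

Lemma pi_Mp j a : j \in NJ -> (1 <= a <= m1)%N -> pi j a \in Mp /\ ell j (pi j a) = a.
Proof. by move=> jNJ a_in; case: (pi_sorted jNJ) => + _; apply. Qed.

Lemma gam_pi_le j a b : j \in NJ -> (1 <= a)%N -> (a <= b <= m1)%N ->
  (gam (pi j a) j <= gam (pi j b) j)%E.
Proof. by move=> jNJ; case: (pi_sorted jNJ) => _ [_]; apply. Qed.

Lemma coefS_le j a : j \in NJ -> (1 <= a)%N -> coef j a.+1 <= coef j a.
Proof.
move=> jNJ a_ge1; rewrite /coef; case: (ltnP a m1) => [a_lt|_].
  have a_in : (1 <= a <= m1)%N by rewrite a_ge1 ltnW.
  rewrite andbT a_in; apply: inv_e_le; last by apply: gam_pi_le; rewrite ?leqnSn.
  exact: Mp_gam_gt0 (pi_Mp jNJ a_in).1 jNJ.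
rewrite andbF; case: ifP => // a_in; apply/inv_e_ge0/ltW.
exact: Mp_gam_gt0 (pi_Mp jNJ a_in).1 jNJ.
Qed.

Lemma sum_Mp_pi j (F : 'I_n -> R) : j \in NJ ->
  \sum_(i in Mp) F i = \sum_(1 <= a < m1.+1) F (pi j a).
Proof.
move=> jNJ; rewrite -big_enum -(big_map (pi j) xpredT F) /=.
apply/perm_big/uniq_perm; first exact: enum_uniq.
  rewrite map_inj_in_uniq ?iota_uniq // => a b.
  rewrite !mem_index_iota !ltnS => a_in b_in pi_ab.
  by rewrite -(pi_Mp jNJ a_in).2 pi_ab (pi_Mp jNJ b_in).2.
move=> i; rewrite mem_enum; apply/idP/mapP => [iM|[a a_in ->]].
  have [ell_in pi_ell] := ell_Mp jNJ iM.
  by exists (ell j i); rewrite ?mem_index_iota ?ltnS ?pi_ell.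
by rewrite mem_index_iota ltnS in a_in; apply: (pi_Mp jNJ a_in).1.
Qed.

Lemma sum_Mp_rank_ge j a (F : nat -> R) : j \in NJ -> (1 <= a)%N ->
  \sum_(i in Mp | (a <= ell j i)%N) F (ell j i) = \sum_(a <= b < m1.+1) F b.
Proof.
move=> jNJ a_ge1; rewrite big_mkcondr (sum_Mp_pi _ jNJ) /=.
under eq_big_nat => b b_in do rewrite (pi_Mp jNJ b_in).2.
rewrite -big_mkcond !big_geq_mkord; apply: eq_bigl => b /=.
by apply/andP/idP => [[]//|a_le]; rewrite a_le (leq_trans a_ge1 a_le).
Qed.

Lemma inv_eps_min j (S : {set 'I_n}) i0 : j \in NJ -> S \subset Mp -> i0 \in S ->
  (forall i, i \in S -> (ell j i0 <= ell j i)%N) -> inv_e (eps S j) = coef j (ell j i0).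
Proof.
move=> jNJ SM i0S i0_min.
have [i0_in pi_i0] := ell_Mp jNJ (fintype.subsetP SM _ i0S).
have -> : eps S j = gam i0 j.
  apply: le_anti; apply/andP; split; first exact: bigmin_le_cond.
  apply: le_bigmin => [|i iS]; first exact: leey.
  have [i_in pi_i] := ell_Mp jNJ (fintype.subsetP SM _ iS).
  rewrite -pi_i0 -pi_i; apply: gam_pi_le => //; first by case/andP: i0_in.
  by rewrite i0_min //; case/andP: i_in.
by rewrite /coef i0_in pi_i0.
Qed.

Lemma theta_feasible_proj_set x th : theta_feasible x th -> proj_set x.
Proof.
move=> [x_ge0 th_ge0 tail cover]; split=> // S SM.
have col_bound j : j \in NJ -> \sum_(i in S) th (ell j i) j <= x j * inv_e (eps S j).
  move=> jNJ; have [->|[i1 i1S]] := set_0Vmem S.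
    by rewrite big_set0 /eps big_set0 mulr0.
  case: (arg_minnP (ell j) i1S) => i0 i0S i0_min.
  have [a_in _] := ell_Mp jNJ (fintype.subsetP SM _ i0S).
  rewrite (inv_eps_min jNJ SM i0S i0_min) mulrC; apply: le_trans (tail _ _ a_in jNJ).
  rewrite -(sum_Mp_rank_ge (th^~ j) jNJ (proj1 (andP a_in))) big_mkcond [leRHS]big_mkcond /=.
  apply: ler_sum => i _.
  case: ifP => [iS|_]; first by rewrite (fintype.subsetP SM _ iS) i0_min.
  by case: ifP => // /andP[/(ell_Mp jNJ)[ell_in _] _]; apply: th_ge0.
rewrite subr_le0; apply: le_trans (_ : _ <= \sum_(i in S) \sum_(j in NJ) th (ell j i) j) _.
  by apply: ler_sum => i iS; apply: cover; apply: (fintype.subsetP SM).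
by rewrite exchange_big; apply: ler_sum => j jNJ; apply: col_bound.
Qed.

Definition slot_edge (i : 'I_n) (p : 'I_n * 'I_n) : bool :=
  [&& i \in Mp, p.1 \in NJ, p.2 \in Mp & (ell p.1 i <= ell p.1 p.2)%N].

Definition slot_cap (x : 'I_n -> R) (p : 'I_n * 'I_n) : R :=
  if (p.1 \in NJ) && (p.2 \in Mp)
  then x p.1 * (coef p.1 (ell p.1 p.2) - coef p.1 (ell p.1 p.2).+1) else 0.

Lemma slot_cap_ge0 x : (forall j, j \in ~: B -> 0 <= x j) -> forall p, 0 <= slot_cap x p.
Proof.
move=> x_ge0 [j i]; rewrite /slot_cap /=; case: ifP => // /andP[jNJ iM].
rewrite mulr_ge0 ?x_ge0 ?NJ_nonbasic // subr_ge0 coefS_le //.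
by case/andP: (ell_Mp jNJ iM).1.
Qed.

Lemma sum_slot_cap x j a : j \in NJ -> (1 <= a <= m1.+1)%N ->
  \sum_(i in Mp | (a <= ell j i)%N) slot_cap x (j, i) = x j * coef j a.
Proof.
move=> jNJ /andP[a_ge1 a_le]; rewrite -(sum_coef_tail j a_le) mulr_sumr.
rewrite -(sum_Mp_rank_ge (fun b => x j * (coef j b - coef j b.+1)) jNJ a_ge1).
by apply: eq_bigr => i /andP[iM _]; rewrite /slot_cap /= jNJ iM.
Qed.

Lemma proj_set_hall x : proj_set x -> hall_condition slot_edge (restr Mp x) (slot_cap x).
Proof.
move=> [x_ge0 proj_ineq] S; rewrite sum_restr.
apply: le_trans (_ : _ <= \sum_(j in NJ) x j * inv_e (eps (S :&: Mp) j)) _.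
  by rewrite -subr_le0; apply/proj_ineq/subsetIr.
rewrite (_ : \sum_(p in nbhd slot_edge S) slot_cap x p =
  \sum_j \sum_i (if (j, i) \in nbhd slot_edge S then slot_cap x (j, i) else 0)); last first.
  by rewrite big_mkcond pair_big; apply: eq_bigr => -[].
rewrite [leLHS]big_mkcond; apply: ler_sum => j _.
case: ifP => [jNJ|_]; last by apply: sumr_ge0 => i _; case: ifP => // _; apply: slot_cap_ge0.
have [->|[i1 i1S]] := set_0Vmem (S :&: Mp).
  by rewrite /eps big_set0 mulr0; apply: sumr_ge0 => i _; case: ifP => // _; apply: slot_cap_ge0.
case: (arg_minnP (ell j) i1S) => i0 i0SM i0_min.
have /finset.setIP[S_i0 M_i0] := i0SM.
rewrite (inv_eps_min jNJ (subsetIr S Mp) i0SM i0_min) -sum_slot_cap //; last first.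
  by case/andP: (ell_Mp jNJ M_i0).1 => -> /leqW.
rewrite big_mkcond; apply: ler_sum => i _ /=.
case: ifP => [/andP[iM le_i0]|_]; last by case: ifP => // _; apply: slot_cap_ge0.
by rewrite ifT //; apply/nbhdP; exists i0; rewrite // /slot_edge /= M_i0 jNJ iM.
Qed.

Lemma flow_theta_feasible x f : (forall j, j \in ~: B -> 0 <= x j) ->
  feasible_flow slot_edge f (restr Mp x) (slot_cap x) ->
  theta_feasible x (fun a j => \sum_i f (pi j a) (j, i)).
Proof.
move=> x_ge0 [f_ge0 f_edge f_dem f_cap]; split=> // [a j _ _|a j a_in jNJ|i iM].
- exact: sumr_ge0.
- have [a_ge1 a_le] := andP a_in.
  rewrite -(sum_Mp_rank_ge (fun b => \sum_i f (pi j b) (j, i)) jNJ a_ge1).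
  under eq_bigr => i /andP[iM _] do rewrite (ell_Mp jNJ iM).2.
  rewrite mulrC -(@sum_slot_cap x j a) ?a_ge1 ?leqW // exchange_big /=.
  rewrite [leRHS]big_mkcond; apply: ler_sum => i' _ /=.
  case: ifP => [_|i'_out].
    apply: le_trans (f_cap (j, i')).
    by rewrite [leRHS](bigID (fun i => (i \in Mp) && (a <= ell j i)%N)) /= lerDl sumr_ge0.
  rewrite big1 // => i /andP[iM a_le_i]; apply: f_edge.
  rewrite /slot_edge /= iM jNJ /=; apply: contraFN i'_out => /andP[-> le_i'].
  exact: leq_trans a_le_i le_i'.
- have := f_dem i; rewrite /restr iM => /le_trans; apply.
  rewrite (_ : \sum_p f i p = \sum_j \sum_i' f i (j, i')); last first.
    by rewrite pair_big; apply: eq_bigr => -[].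
  rewrite (bigID (mem NJ)) /= [X in _ + X]big1 ?addr0 => [|j /negbTE jNJ]; last first.
    by apply: big1 => i' _; apply: f_edge; rewrite /slot_edge /= jNJ andbF.
  by apply: ler_sum => j jNJ; rewrite (ell_Mp jNJ iM).2.
Qed.

Lemma proj_set_theta_feasible x : proj_set x -> exists th, theta_feasible x th.
Proof.
move=> px; have [x_ge0 _] := px.
have d_ge0 : forall i, 0 <= restr Mp x i by apply: restr_ge0 => i /Mp_nonbasic /x_ge0.
have [f hf] := supply_demand d_ge0 (slot_cap_ge0 x_ge0) (proj_set_hall px).
by eexists; apply: flow_theta_feasible hf.
Qed.

End Sorted.
End Projection.

Local Open Scope classical_set_scope.

Theorem theorem7 (R : realType) (m n : nat) (A : 'M[R]_(m, n)) (b : 'cV[R]_m)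
    (C : set 'cV[R]_n) (B : {set 'I_n}) (ab : 'I_n -> 'I_n -> R) (bb : 'I_n -> R)
    (k : 'I_n) (pi : 'I_n -> nat -> 'I_n) (ell : 'I_n -> 'I_n -> nat) :
  row_free A ->
  open C -> convex_set C ->
  #|B| = m ->
  (forall x : 'cV[R]_n, A *m x = b <-> tableau_eqs B ab bb x) ->
  (forall i, i \in B -> 0 <= bb i) ->
  ~ closure C (xbar B bb) ->
  recc C `<=` recc (PB B ab bb) ->
  k \in N2 B ab bb C ->
  ~~ (N0 B ab bb C \subset Jset B ab bb C k) ->
  sorted_bij B ab bb C k pi ell ->
  forall x : 'I_n -> R,
    (exists (th v : nat -> 'I_n -> R) (lam : 'I_n -> R),
        Qk B ab bb C k pi ell x th v lam) <->
    proj_set B ab bb C k x.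
Proof.
(* Once the gam' are fixed the identity is combinatorial: only the sortedness
   of the pi_j is needed. *)
move=> _ _ _ _ _ _ _ _ _ _ pi_sorted x; split=> [[th [v [lam hQ]]] | px].
  exact: (theta_feasible_proj_set pi_sorted (Qk_theta_feasible hQ)).
have [th th_feasible] := proj_set_theta_feasible pi_sorted px.
by exists th; apply: theta_feasible_Qk.
Qed.
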